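(* The $R$-linear map $\kappa:V^*\to V^{\otimes n-1}$ defined by \[ v_i^*\mapsto (-q)^i\sum_{w\in\mathfrak S_{n-1}}(-q)^{l(w)}v_{(1,2,\ldots,\hat i,\ldots,n).w}\qquad(1\le i\le n) \] is a well-defined monomorphism of $\mathbf U'$-modules. (Here $(1,\ldots,\hat i,\ldots,n)$ is the multi-index of length $n-1$ obtained by omitting $i$.)
   Context: $R$ commutative ring with $1$, $q\in R$ invertible, $n\ge 1$. $\mathbf U'$ is the $R$-form (obtained by base change $\mathbb Z[q,q^{-1}]\to R$, $q\mapsto q$) of the $\mathbb Z[q,q^{-1}]$-subalgebra of $U_q(\mathfrak{gl}_n)$ generated by the $K_i=q^{h_i-h_{i+1}}$ and the divided powers $e_i^{(l)}=e_i^l/[l]_q!$, $f_i^{(l)}=f_i^l/[l]_q!$ ($1\le i\le n-1$, $l\ge 0$, $[l]_q=\sum_{t=0}^{l-1}q^{2t-l+1}$); it is a sub-Hopf algebra of the analogous $R$-form $\mathbf U$ of $U_q(\mathfrak{gl}_n)$, with $\Delta(K_i)=K_i\otimes K_i$, $\Delta(e_i)=e_i\otimes K_i^{-1}+1\otimes e_i$, $\Delta(f_i)=f_i\otimes 1+K_i\otimes f_i$, $S(K_i)=K_i^{-1}$, $S(e_i)=-e_iK_i$, $S(f_i)=-K_i^{-1}f_i$. $V=R^n$ with basis $v_1,\dots,v_n$: $K_iv_j=q^{\delta_{ij}-\delta_{i+1,j}}v_j$, $e_iv_{i+1}=v_i$, $e_iv_j=0$ for $j\ne i+1$, $f_iv_i=v_{i+1}$,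 $f_iv_j=0$ for $j\neq i$, and $e_i^{(l)},f_i^{(l)}$ act as $0$ for $l\ge2$. $\mathbf U'$ acts on tensor powers via $\Delta$ and on $V^*=\mathrm{Hom}_R(V,R)$ (dual basis $v_1^*,\dots,v_n^*$) by $(xf)(w)=f(S(x)w)$. For a multi-index $\mathbf i=(i_1,\dots,i_m)$, $v_{\mathbf i}=v_{i_1}\otimes\cdots\otimes v_{i_m}$; $\mathfrak S_m$ acts on multi-indices on the right by place permutations ($\mathbf i.s_t$ swaps the entries in positions $t,t+1$); $l(w)$ is the Coxeter length. *)

From HB Require Import structures.
From mathcomp Require Import all_boot all_order all_algebra all_fingroup.
Set Implicit Arguments. Unset Strict Implicit. Unset Printing Implicit Defensive.
Import Order.TTheory GRing.Theory Num.Theory.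
Local Open Scope ring_scope.

(* Conventions: indices are zero-based.  Basis vector v_{k+1}
   of the paper is the ordinal k : 'I_n; the generator e_{i+1},f_{i+1},K_{i+1}
   of the paper is indexed by i : 'I_n with i.+1 < n.  Elements of V (and of
   V^* = Hom_R(V,R), via phi |-> (k |-> phi(v_k))) are coordinate vectors
   {ffun 'I_n -> R}; elements of V^{(x) m} are coordinate functions on
   multi-indices {ffun m.-tuple 'I_n -> R}. *)

Definition scf (R : comUnitRingType) (T : finType) (c : R) (f : {ffun T -> R})
  : {ffun T -> R} := [ffun x => c * f x].
Notation "c *:: f" := (scf c f) (at level 40).

Section QuantumGL.
Variable R : comUnitRingType.
Variable q : R.
Variable n : nat.

Local Notation vec := {ffun 'I_n -> R}.
Local Notation tensor m := {ffun m.-tuple 'I_n -> R}.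

(* weight: K_i v_k = q^(hwt i k) v_k *)
Definition hwt (i k : 'I_n) : int :=
  (nat_of_bool (val k == val i))%:Z - (nat_of_bool (val k == (val i).+1))%:Z.

(* the ordinal i+1 (meaningful when i.+1 < n) *)
Definition up (i : 'I_n) : 'I_n := insubd i (val i).+1.

Definition vbasis (k : 'I_n) : vec := [ffun k' => (k' == k)%:R].

Definition vK (i : 'I_n) (z : int) (v : vec) : vec :=
  [ffun k => exprz q (z * hwt i k) * v k].
Definition vE (i : 'I_n) (v : vec) : vec :=
  [ffun k => if val k == val i then v (up i) else 0].
Definition vF (i : 'I_n) (v : vec) : vec :=
  [ffun k => if val k == (val i).+1 then v i else 0].

(* action on V of the antipodes S(e_i^(l)), S(f_i^(l)):
   S(e_i^(0)) = S(f_i^(0)) = 1, S(e_i) = - e_i K_i, S(f_i) = - K_i^-1 f_i,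
   and for l >= 2, S(e_i^(l)) (resp. S(f_i^(l))) is a unit multiple of
   e_i^(l) K_i^l (resp. K_i^-l f_i^(l)), which acts as 0 on V. *)
Definition vSE (i : 'I_n) (l : nat) (v : vec) : vec :=
  match l with 0 => v | 1 => - vE i (vK i 1 v) | _ => 0 end.
Definition vSF (i : 'I_n) (l : nat) (v : vec) : vec :=
  match l with 0 => v | 1 => - vK i (-1) (vF i v) | _ => 0 end.

(* dual module: (x phi)(w) = phi(S(x) w) *)
Definition pairing (phi v : vec) : R := \sum_k phi k * v k.
Definition dualize (S : vec -> vec) (phi : vec) : vec :=
  [ffun k => pairing phi (S (vbasis k))].
Definition dK (i : 'I_n) (z : int) := dualize (vK i (- z)).
Definition dE (i : 'I_n) (l : nat) := dualize (vSE i l).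
Definition dF (i : 'I_n) (l : nat) := dualize (vSF i l).

Definition tbasis (m : nat) (j : m.-tuple 'I_n) : tensor m :=
  [ffun j' => (j' == j)%:R].
Definition wt (m : nat) (i : 'I_n) (j : m.-tuple 'I_n) : int :=
  \sum_(p < m) hwt i (tnth j p).
Definition replace (m : nat) (j : m.-tuple 'I_n) (S : {set 'I_m}) (k : 'I_n)
  : m.-tuple 'I_n := [tuple if p \in S then k else tnth j p | p < m].

(* K_i^z acts diagonally (Delta(K) = K (x) K) *)
Definition tK (m : nat) (i : 'I_n) (z : int) (t : tensor m) : tensor m :=
  [ffun j => exprz q (z * wt i j) * t j].

(* e_i^(l) on a basis tensor v_j, obtained from the iterated coproduct of
   Delta(e) = e (x) K^-1 + 1 (x) e (divided by [l]!): sum over the l-sets S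
   of positions carrying v_{i+1}, each changed to v_i, with coefficient
   q^(- sum_{p in S} sum_{r > p, r notin S} hwt i j_r). *)
Definition tE_basis (m : nat) (i : 'I_n) (l : nat) (j : m.-tuple 'I_n)
  : tensor m :=
  \sum_(S : {set 'I_m} | (#|S| == l) &&
                          [forall p in S, val (tnth j p) == (val i).+1])
     exprz q (- \sum_(p in S) \sum_(r : 'I_m | (val p < val r)%N && (r \notin S))
               hwt i (tnth j r)) *:: tbasis (replace j S i).
(* f_i^(l) likewise, from Delta(f) = f (x) 1 + K (x) f *)
Definition tF_basis (m : nat) (i : 'I_n) (l : nat) (j : m.-tuple 'I_n)
  : tensor m :=
  \sum_(S : {set 'I_m} | (#|S| == l) &&
                          [forall p in S, val (tnth j p) == val i])
     exprz q (\sum_(p in S) \sum_(r : 'I_m | (val r < val p)%N && (r \notin S))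
               hwt i (tnth j r)) *:: tbasis (replace j S (up i)).

Definition tE (m : nat) (i : 'I_n) (l : nat) (t : tensor m) : tensor m :=
  \sum_j t j *:: tE_basis i l j.
Definition tF (m : nat) (i : 'I_n) (l : nat) (t : tensor m) : tensor m :=
  \sum_j t j *:: tF_basis i l j.

Definition is_Uprime_hom (m : nat) (g : vec -> tensor m) : Prop :=
  forall i : 'I_n, ((val i).+1 < n)%N ->
    [/\ forall (z : int) (phi : vec), g (dK i z phi) = tK i z (g phi),
        forall (l : nat) (phi : vec), g (dE i l phi) = tE i l (g phi) &
        forall (l : nat) (phi : vec), g (dF i l phi) = tF i l (g phi)].

Definition omit (k : 'I_n) : (n.-1).-tuple 'I_n := [tuple lift k p | p < n.-1].
(* right action by place permutations: (j.w)_p = j_{w(p)} *)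
Definition place (m : nat) (j : m.-tuple 'I_n) (w : 'S_m) : m.-tuple 'I_n :=
  [tuple tnth j (w p) | p < m].
Definition coxeter_length (m : nat) (w : 'S_m) : nat :=
  #|[set pr : 'I_m * 'I_m | (val pr.1 < val pr.2)%N && (val (w pr.2) < val (w pr.1))%N]|.

(* kappa applied to the dual basis vector v_k^* ; k zero-based, i.e. paper's i = k+1 *)
Definition kappa_basis (k : 'I_n) : tensor n.-1 :=
  (- q) ^+ (val k).+1 *::
    \sum_(w : 'S_(n.-1)) ((- q) ^+ coxeter_length w *:: tbasis (place (omit k) w)).
Definition kappa (phi : vec) : tensor n.-1 := \sum_k phi k *:: kappa_basis k.

End QuantumGL.

Notation vec R n := {ffun 'I_n -> R}.
Notation tensor R n m := {ffun m.-tuple 'I_n -> R}.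

(* Its coordinate at the unpermuted
   multi-index is (-q)^k, a unit, times the coefficient of v_k^*; this gives
   injectivity.  Each (1,..,k^,..,n).w has minus the weight of v_k, matching the
   action of K_i on v_k^*.
   Since the entries of (1,..,k^,..,n).w are distinct, e_i^(l) and f_i^(l) kill
   it for l >= 2, and e_i just changes its entry i+1 into i.  For k = i+1 there
   is no such entry; for k = i the result is (1,..,(i+1)^,..,n).w; for any other
   k the terms for w and w.s cancel, s being the transposition of the positions
   of i and i+1, because l(w.s) = l(w) +- 1 and the power of q coming from the
   coproduct of e_i supplies the missing factor.  The same holds for f_i with the
   roles of i and i+1 exchanged. *)

From Pilot Require Import Defs.
From HB Require Import structures.
From mathcomp Require Import all_boot all_order all_algebra all_fingroup.
From mathcomp Require Import ring zify.
Set Implicit Arguments. Unset Strict Implicit. Unset Printing Implicit Defensive.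
Import GRing.Theory.
Local Open Scope ring_scope.

Lemma ltn_tperm_succ m (a b u v : 'I_m) : val b = (val a).+1 ->
  (val (tperm a b u) < val (tperm a b v))%N =
  (u == b) && (v == a) || (val u < val v)%N && ~~ ((u == a) && (v == b)).
Proof.
rewrite /= => Eb; rewrite !permE /= !(fun_if (@nat_of_ord m)) -!val_eqE /=.
by repeat case: eqP; lia.
Qed.

Definition inversions m (w : 'S_m) : {set 'I_m * 'I_m} :=
  [set pr | (val pr.1 < val pr.2)%N && (val (w pr.2) < val (w pr.1))%N].

Lemma inversions_mul_tperm m (a b : 'I_m) (w : 'S_m) : val b = (val a).+1 ->
  (val ((w^-1)%g a) < val ((w^-1)%g b))%N ->
  inversions (w * tperm a b)%g = ((w^-1)%g a, (w^-1)%g b) |: inversions w.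
Proof.
move=> Eb lt_ab; apply/setP => -[c d]; rewrite !inE /= !permM ltn_tperm_succ // xpair_eqE.
have ne_ab : (w^-1 a == w^-1 b)%g = false.
  by rewrite (inj_eq perm_inj) -val_eqE Eb; apply/negbTE; rewrite neq_ltn ltnSn.
have ne_ba : (w^-1 b == w^-1 a)%g = false by rewrite eq_sym.
rewrite !(canF_eq (permK w)).
have [->|_] := eqVneq c (w^-1 a)%g; have [->|_] := eqVneq d (w^-1 b)%g;
  rewrite ?permKV ?ne_ab ?ne_ba ?andbF ?andbT //=.
have [->|_] := eqVneq d (w^-1 a)%g; have [->|_] := eqVneq c (w^-1 b)%g;
  by rewrite ?andbF ?andbT // ltnNge (ltnW lt_ab).
Qed.

Lemma coxeter_length_mul_tperm m (a b : 'I_m) (w : 'S_m) : val b = (val a).+1 ->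
  (val ((w^-1)%g a) < val ((w^-1)%g b))%N ->
  coxeter_length (w * tperm a b)%g = (coxeter_length w).+1.
Proof.
move=> Eb lt_ab; rewrite -[LHS]/#|inversions _| inversions_mul_tperm // cardsU1.
by move: Eb => /= Eb; rewrite inE /= !permKV Eb (leq_gtF (leqnSn _)) andbF.
Qed.

Lemma coxeter_length1 m : coxeter_length (1%g : 'S_m) = 0%N.
Proof.
apply/eqP; rewrite cards_eq0; apply/eqP/setP => -[a b]; rewrite !inE /= !perm1.
by case: ltngtP.
Qed.

Lemma sum_sign_reversing_involution (V : zmodType) (T : finType) (h : T -> T)
    (P : pred T) (F : T -> V) :
  involutive h -> (forall x, P (h x) = ~~ P x) ->
  (forall x, P x -> F (h x) = - F x) -> \sum_x F x = 0.
Proof.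
move=> hK hP hF; rewrite (bigID P) /= [X in _ + X](reindex_inj (inv_inj hK)) /=.
rewrite [X in _ + X](eq_bigl P) => [|x]; last by rewrite hP negbK.
by rewrite -big_split big1 => // x Px /=; rewrite hF // subrr.
Qed.

Lemma sum_indicator (T : finType) (P : pred T) (x : T) :
  \sum_(r | P r) (r == x)%:Z = (P x)%:Z.
Proof.
case Px: (P x); last by rewrite big1 // => r Pr; case: eqP Pr => // ->; rewrite Px.
by rewrite (bigD1 x) //= eqxx big1 ?addr0 // => r /andP[_ /negbTE->].
Qed.

Section Kappa.
Variables (R : comUnitRingType) (q : R) (n : nat).
Hypothesis q_unit : q \is a GRing.unit.

Local Notation vec := {ffun 'I_n -> R}.
Local Notation tensor m := {ffun m.-tuple 'I_n -> R}.

Lemma scfE (T : finType) c (f : {ffun T -> R}) x : (c *:: f) x = c * f x.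
Proof. exact: ffunE. Qed.

Lemma scf_sumr (I : finType) (T : finType) c (f : I -> {ffun T -> R}) :
  c *:: \sum_a f a = \sum_a c *:: f a.
Proof.
by apply/ffunP => x; rewrite scfE !sum_ffunE mulr_sumr; apply: eq_bigr => a _; rewrite scfE.
Qed.

Lemma scfrA (T : finType) c d (f : {ffun T -> R}) : c *:: (d *:: f) = (c * d) *:: f.
Proof. by apply/ffunP => x; rewrite !scfE mulrA. Qed.

Lemma scfNr (T : finType) c (f : {ffun T -> R}) : (- c) *:: f = - (c *:: f).
Proof. by apply/ffunP => x; rewrite !ffunE mulNr. Qed.

Lemma scf1r (T : finType) (f : {ffun T -> R}) : 1 *:: f = f.
Proof. by apply/ffunP => x; rewrite scfE mul1r. Qed.

Lemma scf0r (T : finType) (f : {ffun T -> R}) : 0 *:: f = 0.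
Proof. by apply/ffunP => x; rewrite scfE ffunE mul0r. Qed.

Lemma scfr0 (T : finType) c : c *:: (0 : {ffun T -> R}) = 0.
Proof. by apply/ffunP => x; rewrite scfE ffunE mulr0. Qed.

Lemma tbasisE m (j x : m.-tuple 'I_n) : tbasis R x j = (j == x)%:R.
Proof. exact: ffunE. Qed.

Lemma tnth_omit (k : 'I_n) p : tnth (omit k) p = lift k p.
Proof. exact: tnth_mktuple. Qed.

Lemma tnth_place m (j : m.-tuple 'I_n) w p : tnth (place j w) p = tnth j (w p).
Proof. exact: tnth_mktuple. Qed.

Lemma tnth_replace m (j : m.-tuple 'I_n) S k p :
  tnth (replace j S k) p = if p \in S then k else tnth j p.
Proof. exact: tnth_mktuple. Qed.

Lemma place_omit_inj (k : 'I_n) (w : 'S_(n.-1)) : injective (tnth (place (omit k) w)).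
Proof. by move=> x y; rewrite !tnth_place !tnth_omit => /lift_inj /perm_inj. Qed.

Lemma place_mul m (t : m.-tuple 'I_n) (w s : 'S_m) :
  place t (w * s)%g = place (place t s) w.
Proof. by apply: eq_from_tnth => r; rewrite !tnth_place permM. Qed.

Lemma place_tperm m (t : m.-tuple 'I_n) (a b : 'I_m) :
  tnth t a = tnth t b -> place t (tperm a b) = t.
Proof.
by move=> tab; apply: eq_from_tnth => r; rewrite tnth_place; case: tpermP => [->|->|].
Qed.

Lemma replace_place m (t : m.-tuple 'I_n) (w : 'S_m) p x :
  replace (place t w) [set (w^-1)%g p] x = place (replace t [set p] x) w.
Proof.
apply: eq_from_tnth => r.
by rewrite tnth_replace !tnth_place tnth_replace !in_set1 -(canF_eq (permK w)).
Qed.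

Lemma replace_set0 m (t : m.-tuple 'I_n) x : replace t set0 x = t.
Proof. by apply: eq_from_tnth => p; rewrite tnth_replace inE. Qed.

Lemma lift_adjacent (k k' : 'I_n) : val k' = (val k).+1 ->
  exists b, lift k b = k' /\ lift k' b = k.
Proof.
move=> /= Ek'; have lt_k : (k < n.-1)%N by have := ltn_ord k'; rewrite -subn1; lia.
by exists (Ordinal lt_k); split; apply: val_inj; rewrite /= /bump ?Ek'; lia.
Qed.

Lemma lift_adjacent_pair (k x y : 'I_n) : val y = (val x).+1 -> k != x -> k != y ->
  exists a b : 'I_n.-1, [/\ lift k a = x, lift k b = y & val b = (val a).+1].
Proof.
move=> /= Ey /unlift_some[a Ea _] /unlift_some[b Eb _]; exists a, b; split => //.
by move: Ey (neq_lift k a) (neq_lift k b); rewrite Ea Eb -!val_eqE /= /bump; lia.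
Qed.

Lemma replace_omit (k k' : 'I_n) b : lift k b = k' -> lift k' b = k ->
  replace (omit k) [set b] k = omit k'.
Proof.
move=> Ek' Ek; apply: eq_from_tnth => r; rewrite tnth_replace !tnth_omit in_set1.
case: eqP => [->|/eqP nrb] //; apply: val_inj.
by move: (congr1 val Ek') (congr1 val Ek) nrb; rewrite -val_eqE /= /bump; lia.
Qed.

Lemma kappaE (phi : vec) (x : (n.-1).-tuple 'I_n) :
  kappa q phi x = \sum_k \sum_(w : 'S_(n.-1))
     phi k * (- q) ^+ (val k).+1 * (- q) ^+ coxeter_length w * (x == place (omit k) w)%:R.
Proof.
rewrite sum_ffunE; apply: eq_bigr => k _; rewrite !scfE sum_ffunE !mulr_sumr.
by apply: eq_bigr => w _; rewrite scfE tbasisE !mulrA.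
Qed.

Lemma kappa_linear a (phi psi : vec) :
  kappa q (a *:: phi + psi) = a *:: kappa q phi + kappa q psi.
Proof.
apply/ffunP => x; rewrite !ffunE !kappaE mulr_sumr -big_split /=.
apply: eq_bigr => k _; rewrite mulr_sumr -big_split /=.
by apply: eq_bigr => w _; rewrite !ffunE; ring.
Qed.

Lemma omit_eq_place (k k' : 'I_n) (w : 'S_(n.-1)) :
  (omit k == place (omit k') w) = (k == k') && (w == 1%g).
Proof.
apply/eqP/andP => [E|[/eqP-> /eqP->]]; last first.
  by apply: eq_from_tnth => p; rewrite tnth_place perm1.
have Ep p : lift k p = lift k' (w p) by rewrite -!tnth_omit -tnth_place -E.
have Ek : k = k'.
  apply/eqP; apply/negPn/negP => /unlift_some[p Ek' _].
  by have := neq_lift k' (w p); rewrite -Ep -Ek' eqxx.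
subst k'; split => //; apply/eqP/permP => p; rewrite perm1.
exact/esym/(lift_inj (Ep p)).
Qed.

Lemma kappa_omit (phi : vec) (k : 'I_n) :
  kappa q phi (omit k) = phi k * (- q) ^+ (val k).+1.
Proof.
rewrite kappaE (bigD1 k) //= [X in _ + X]big1 ?addr0 => [|k' nk]; last first.
  by apply: big1 => w _; rewrite omit_eq_place eq_sym (negbTE nk) mulr0.
rewrite (bigD1 1%g) //= [X in _ + X]big1 ?addr0 => [|w nw]; last first.
  by rewrite omit_eq_place eqxx (negbTE nw) mulr0.
by rewrite omit_eq_place !eqxx coxeter_length1 !mulr1.
Qed.

Lemma kappa_inj : injective (kappa q (n:=n)).
Proof.
move=> phi psi E; apply/ffunP => k.
have unit_k : (- q) ^+ (val k).+1 \is a GRing.unit by rewrite unitrX // unitrN.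
by apply: (mulIr unit_k); rewrite -!kappa_omit E.
Qed.

(* [tE q i l] and [tF q i l] are, by definition, [linext (tE_basis q i l)] and
   [linext (tF_basis q i l)]. *)
Definition linext m (B : m.-tuple 'I_n -> tensor m) (t : tensor m) : tensor m :=
  \sum_j t j *:: B j.

Section LinearExtension.
Variables (m : nat) (B : m.-tuple 'I_n -> tensor m).

Lemma linext_tbasis x : linext B (tbasis R x) = B x.
Proof.
apply/ffunP => y; rewrite sum_ffunE (bigD1 x) //= big1 ?addr0 => [|j /negbTE nj].
  by rewrite scfE tbasisE eqxx mul1r.
by rewrite scfE tbasisE nj mul0r.
Qed.

Lemma linext_scf c t : linext B (c *:: t) = c *:: linext B t.
Proof. by rewrite /linext scf_sumr; apply: eq_bigr => j _; rewrite scfE scfrA. Qed.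

Lemma linext_sum (I : finType) (t : I -> tensor m) :
  linext B (\sum_a t a) = \sum_a linext B (t a).
Proof.
rewrite /linext exchange_big /=; apply: eq_bigr => j _.
by apply/ffunP => x; rewrite scfE !sum_ffunE mulr_suml; apply: eq_bigr => a _; rewrite scfE.
Qed.

Lemma linext_tbasis_id (t : tensor m) : linext (@tbasis R n m) t = t.
Proof.
apply/ffunP => x; rewrite sum_ffunE (bigD1 x) //= big1 ?addr0 => [|j /negbTE nj].
  by rewrite scfE tbasisE eqxx mulr1.
by rewrite scfE tbasisE eq_sym nj mulr0.
Qed.

End LinearExtension.

Lemma linext_kappa_basis (B : (n.-1).-tuple 'I_n -> tensor n.-1) k :
  linext B (kappa_basis q k) =
  (- q) ^+ (val k).+1 *::
    \sum_(w : 'S_(n.-1)) (- q) ^+ coxeter_length w *:: B (place (omit k) w).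
Proof.
rewrite linext_scf linext_sum; congr (_ *:: _).
by apply: eq_bigr => w _; rewrite linext_scf linext_tbasis.
Qed.

Lemma linext_kappa (B : (n.-1).-tuple 'I_n -> tensor n.-1) (phi : vec) :
  linext B (kappa q phi) = \sum_k phi k *:: linext B (kappa_basis q k).
Proof. by rewrite linext_sum; apply: eq_bigr => k _; rewrite linext_scf. Qed.

Section SubsetsOfPositions.
Variables (V : zmodType) (m : nat) (j : m.-tuple 'I_n) (x : nat) (F : {set 'I_m} -> V).

Lemma sum_subsets_at0 :
  \sum_(S : {set 'I_m} | (#|S| == 0%N) && [forall p in S, val (tnth j p) == x]) F S =
  F set0.
Proof.
rewrite (big_pred1 set0) // => S; rewrite /= cards_eq0.
by case: eqP => [->|] //=; apply/forall_inP => p; rewrite inE.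
Qed.

Lemma sum_subsets_at_absent l : (0 < l)%N -> (forall p, val (tnth j p) != x) ->
  \sum_(S : {set 'I_m} | (#|S| == l) && [forall p in S, val (tnth j p) == x]) F S = 0.
Proof.
move=> l_gt0 jx; rewrite big_pred0 // => S; apply/negbTE/andP => -[/eqP cS /forall_inP jS].
have /card_gt0P[p /jS] : (0 < #|S|)%N by rewrite cS.
by rewrite (negbTE (jx p)).
Qed.

Hypothesis j_inj : injective (tnth j).

Lemma sum_subsets_at_gt1 l : (1 < l)%N ->
  \sum_(S : {set 'I_m} | (#|S| == l) && [forall p in S, val (tnth j p) == x]) F S = 0.
Proof.
move=> l_gt1; rewrite big_pred0 // => S; apply/negbTE/andP => -[/eqP cS /forall_inP jS].
have /card_gt1P[p [r [pS rS /negP]]] : (1 < #|S|)%N by rewrite cS.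
by apply; apply/eqP/j_inj/val_inj; rewrite (eqP (jS _ pS)) (eqP (jS _ rS)).
Qed.

Lemma sum_subsets_at1 p : val (tnth j p) = x ->
  \sum_(S : {set 'I_m} | (#|S| == 1%N) && [forall p in S, val (tnth j p) == x]) F S =
  F [set p].
Proof.
move=> jp; rewrite (big_pred1 [set p]) // => S /=.
apply/andP/eqP => [[/cards1P[r ->] /forall_inP jS]|->]; last first.
  by rewrite cards1; split => //; apply/forall_inP => r /set1P ->; rewrite jp.
by congr [set _]; apply/j_inj/val_inj; rewrite jp; apply/eqP/jS/set11.
Qed.

End SubsetsOfPositions.

(* The terms for w and w * (a b) cancel: their lengths differ by one, and the
   power of q is q^-1 exactly for the longer of the two. *)
Lemma sum_tperm_invariant_cancel m (a b : 'I_m) (u : m.-tuple 'I_n) :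
  val b = (val a).+1 -> tnth u a = tnth u b ->
  \sum_(w : 'S_m) (- q) ^+ coxeter_length w *::
     (q ^ (- (val ((w^-1)%g b) < val ((w^-1)%g a))%N%:Z) *:: tbasis R (place u w)) = 0.
Proof.
move=> Eb uab; set s := tperm a b.
have inv_ws (w : 'S_m) : ((w * s)^-1)%g a = (w^-1)%g b /\ ((w * s)^-1)%g b = (w^-1)%g a.
  by rewrite invMg tpermV !permM tpermL tpermR.
have ne_ab (w : 'S_m) : val ((w^-1)%g a) != val ((w^-1)%g b).
  by rewrite val_eqE (inj_eq perm_inj) -val_eqE Eb neq_ltn ltnSn.
apply: (@sum_sign_reversing_involution _ _ (fun w : 'S_m => w * s)%g
          (fun w : 'S_m => val ((w^-1)%g a) < val ((w^-1)%g b))%N).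
- by move=> w; rewrite -mulgA tperm2 mulg1.
- by move=> w; case: (inv_ws w) => -> ->; rewrite -leqNgt ltn_neqAle eq_sym ne_ab.
move=> w lt_ab; case: (inv_ws w) => -> ->.
rewrite coxeter_length_mul_tperm // place_mul place_tperm // !scfrA -scfNr.
rewrite lt_ab (leq_gtF (ltnW lt_ab)) expr0z mulr1 exprN1 exprS.
by rewrite mulrAC mulNr mulrV // mulN1r.
Qed.

Lemma kappa_scf_vbasis c (k : 'I_n) :
  kappa q (c *:: Defs.vbasis R k) = c *:: kappa_basis q k.
Proof.
apply/ffunP => x; rewrite sum_ffunE (bigD1 k) //= big1 ?addr0 => [|k' nk]; last first.
  by rewrite !scfE ffunE (negbTE nk) mulr0 mul0r.
by rewrite !scfE ffunE eqxx mulr1.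
Qed.

Lemma kappa0 : kappa q (0 : vec) = 0.
Proof. by rewrite /kappa big1 // => k _; rewrite ffunE scf0r. Qed.

Lemma dualize_id (phi : vec) : dualize id phi = phi.
Proof.
apply/ffunP => k; rewrite ffunE /pairing (bigD1 k) //= big1 ?addr0 => [|k' nk].
  by rewrite ffunE eqxx mulr1.
by rewrite ffunE (negbTE nk) mulr0.
Qed.

Lemma dualize0 (phi : vec) : dualize (fun _ => 0) phi = 0.
Proof.
by apply/ffunP => k; rewrite !ffunE /pairing big1 // => k' _; rewrite ffunE mulr0.
Qed.

Section Generators.
Variable i : 'I_n.
Hypothesis lt_i1n : ((val i).+1 < n)%N.

Lemma val_up : val (up i) = (val i).+1.
Proof. by rewrite val_insubd lt_i1n. Qed.

Lemma hwtE (x : 'I_n) : hwt i x = (x == i)%:Z - (x == up i)%:Z.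
Proof. by rewrite /hwt -val_up !val_eqE. Qed.

Lemma sum_hwt : \sum_x hwt i x = 0.
Proof. by under eq_bigr do rewrite hwtE; rewrite sumrB !sum_indicator subrr. Qed.

Lemma wt_place_omit (k : 'I_n) (w : 'S_(n.-1)) : wt i (place (omit k) w) = - hwt i k.
Proof.
rewrite /wt (reindex_inj (@perm_inj _ w^-1)) /=.
under eq_bigr do rewrite tnth_place tnth_omit permKV.
by have /eqP := sum_hwt; rewrite (bigD1_ord k) //= addrC addr_eq0 => /eqP.
Qed.

Lemma dKE z (phi : vec) k : dK q i z phi k = phi k * exprz q (- z * hwt i k).
Proof.
rewrite ffunE /pairing (bigD1 k) //= big1 ?addr0 => [|k' nk]; last first.
  by rewrite !ffunE (negbTE nk) !mulr0.
by rewrite !ffunE eqxx mulr1.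
Qed.

Lemma kappa_dK z (phi : vec) : kappa q (dK q i z phi) = tK q i z (kappa q phi).
Proof.
apply/ffunP => x; rewrite ffunE !kappaE mulr_sumr.
apply: eq_bigr => k _; rewrite mulr_sumr; apply: eq_bigr => w _.
rewrite dKE; case: eqP => [->|_]; last by rewrite !mulr0.
rewrite wt_place_omit mulrN mulNr; ring.
Qed.

Lemma up_neq : up i != i.
Proof. by rewrite -val_eqE val_up neq_ltn ltnSn orbT. Qed.

Lemma tE_basis1 m (j : m.-tuple 'I_n) p : injective (tnth j) -> tnth j p = up i ->
  tE_basis q i 1 j =
  q ^ (- \sum_(r | (val p < val r)%N && (r \notin [set p])) hwt i (tnth j r))
    *:: tbasis R (replace j [set p] i).
Proof.
by move=> j_inj jp; rewrite /tE_basis (sum_subsets_at1 _ j_inj (p := p)) ?big_set1 ?jp ?val_up.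
Qed.

Lemma tF_basis1 m (j : m.-tuple 'I_n) p : injective (tnth j) -> tnth j p = i ->
  tF_basis q i 1 j =
  q ^ (\sum_(r | (val r < val p)%N && (r \notin [set p])) hwt i (tnth j r))
    *:: tbasis R (replace j [set p] (up i)).
Proof.
by move=> j_inj jp; rewrite /tF_basis (sum_subsets_at1 _ j_inj (p := p)) ?big_set1 ?jp.
Qed.

Lemma sum_hwt_place_omit (k : 'I_n) (w : 'S_(n.-1)) a b (P : pred 'I_n.-1) :
  lift k a = i -> lift k b = up i ->
  \sum_(r | P r) hwt i (tnth (place (omit k) w) r) =
  (P ((w^-1)%g a))%:Z - (P ((w^-1)%g b))%:Z.
Proof.
move=> Ea Eb; under eq_bigr => r _ do
  rewrite tnth_place tnth_omit hwtE -[up i]Eb -[in X in X - _]Ea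
          !(inj_eq (@lift_inj _ k)) !(canF_eq (permK w)).
by rewrite sumrB !sum_indicator.
Qed.

Lemma tE1_place_omit_i (w : 'S_(n.-1)) :
  tE_basis q i 1 (place (omit i) w) = tbasis R (place (omit (up i)) w).
Proof.
have [b [Eb Eb']] := lift_adjacent val_up.
rewrite (tE_basis1 (p := (w^-1)%g b) (@place_omit_inj i w)); last first.
  by rewrite tnth_place tnth_omit permKV.
rewrite big1 => [|r /andP[_]]; last first.
  rewrite in_set1 => /negbTE nrb; rewrite tnth_place tnth_omit hwtE -[up i]Eb.
  by rewrite (inj_eq (@lift_inj _ i)) (canF_eq (permK w)) nrb lift_eqF.
by rewrite oppr0 expr0z scf1r replace_place (replace_omit Eb Eb').
Qed.

Lemma tE1_place_omit_up (w : 'S_(n.-1)) : tE_basis q i 1 (place (omit (up i)) w) = 0.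
Proof.
rewrite /tE_basis sum_subsets_at_absent // => p.
by rewrite tnth_place tnth_omit -val_up val_eqE lift_eqF.
Qed.

Lemma tE1_place_omit_other (k : 'I_n) (w : 'S_(n.-1)) a b :
  lift k a = i -> lift k b = up i ->
  tE_basis q i 1 (place (omit k) w) =
  q ^ (- (val ((w^-1)%g b) < val ((w^-1)%g a))%N%:Z)
    *:: tbasis R (place (replace (omit k) [set b] i) w).
Proof.
move=> Ea Eb; rewrite (tE_basis1 (p := (w^-1)%g b) (@place_omit_inj k w)); last first.
  by rewrite tnth_place tnth_omit permKV.
rewrite (sum_hwt_place_omit _ _ Ea Eb) /= !in_set1 eqxx ltnn andbF subr0 replace_place.
by rewrite andb_idr // -val_eqE => /gtn_eqF->.
Qed.

Lemma tF1_place_omit_up (w : 'S_(n.-1)) :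
  tF_basis q i 1 (place (omit (up i)) w) = tbasis R (place (omit i) w).
Proof.
have [b [Eb Eb']] := lift_adjacent val_up.
rewrite (tF_basis1 (p := (w^-1)%g b) (@place_omit_inj (up i) w)); last first.
  by rewrite tnth_place tnth_omit permKV.
rewrite big1 => [|r /andP[_]]; last first.
  rewrite in_set1 => /negbTE nrb; rewrite tnth_place tnth_omit hwtE -[X in _ == X]Eb'.
  by rewrite (inj_eq (@lift_inj _ (up i))) (canF_eq (permK w)) nrb lift_eqF.
by rewrite expr0z scf1r replace_place (replace_omit Eb' Eb).
Qed.

Lemma tF1_place_omit_i (w : 'S_(n.-1)) : tF_basis q i 1 (place (omit i) w) = 0.
Proof.
rewrite /tF_basis sum_subsets_at_absent // => p.
by rewrite tnth_place tnth_omit val_eqE lift_eqF.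
Qed.

Lemma tF1_place_omit_other (k : 'I_n) (w : 'S_(n.-1)) a b :
  lift k a = i -> lift k b = up i ->
  tF_basis q i 1 (place (omit k) w) =
  q ^ (- (val ((w^-1)%g b) < val ((w^-1)%g a))%N%:Z)
    *:: tbasis R (place (replace (omit k) [set a] (up i)) w).
Proof.
move=> Ea Eb; rewrite (tF_basis1 (p := (w^-1)%g a) (@place_omit_inj k w)); last first.
  by rewrite tnth_place tnth_omit permKV.
rewrite (sum_hwt_place_omit _ _ Ea Eb) /= !in_set1 eqxx ltnn andbF sub0r replace_place.
by rewrite andb_idr // -val_eqE => /ltn_eqF->.
Qed.

Lemma tE1_kappa_basis k :
  tE q i 1 (kappa_basis q k) = if k == i then (- q^-1) *:: kappa_basis q (up i) else 0.
Proof.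
rewrite [LHS]linext_kappa_basis; have [->|nki] := eqVneq k i.
  under eq_bigr do rewrite tE1_place_omit_i.
  rewrite /kappa_basis scfrA val_up; congr (_ *:: _).
  by rewrite [in RHS]exprS mulrA mulrNN mulVr // mul1r.
have [->|nku] := eqVneq k (up i).
  by under eq_bigr do rewrite tE1_place_omit_up scfr0; rewrite big1 ?scfr0.
have [a [b [Ea Eb Eab]]] := lift_adjacent_pair val_up nki nku.
under eq_bigr do rewrite (tE1_place_omit_other _ Ea Eb).
rewrite sum_tperm_invariant_cancel ?scfr0 //.
by rewrite !tnth_replace !in_set1 eqxx tnth_omit Ea if_same.
Qed.

Lemma tF1_kappa_basis k :
  tF q i 1 (kappa_basis q k) = if k == up i then (- q) *:: kappa_basis q i else 0.
Proof.
rewrite [LHS]linext_kappa_basis; have [->|nku] := eqVneq k (up i).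
  under eq_bigr do rewrite tF1_place_omit_up.
  by rewrite /kappa_basis scfrA val_up exprS.
have [->|nki] := eqVneq k i.
  by under eq_bigr do rewrite tF1_place_omit_i scfr0; rewrite big1 ?scfr0.
have [a [b [Ea Eb Eab]]] := lift_adjacent_pair val_up nki nku.
under eq_bigr do rewrite (tF1_place_omit_other _ Ea Eb).
rewrite sum_tperm_invariant_cancel ?scfr0 //.
by rewrite !tnth_replace !in_set1 eqxx tnth_omit Eb if_same.
Qed.

Lemma tE_kappa l (phi : vec) :
  tE q i l (kappa q phi) = \sum_k phi k *:: tE q i l (kappa_basis q k).
Proof. exact: linext_kappa. Qed.

Lemma tF_kappa l (phi : vec) :
  tF q i l (kappa q phi) = \sum_k phi k *:: tF q i l (kappa_basis q k).
Proof. exact: linext_kappa. Qed.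

Lemma tE0 (t : tensor n.-1) : tE q i 0 t = t.
Proof.
rewrite -[RHS](linext_tbasis_id t); apply: eq_bigr => j _; congr (_ *:: _).
by rewrite /tE_basis sum_subsets_at0 big_set0 oppr0 expr0z scf1r replace_set0.
Qed.

Lemma tF0 (t : tensor n.-1) : tF q i 0 t = t.
Proof.
rewrite -[RHS](linext_tbasis_id t); apply: eq_bigr => j _; congr (_ *:: _).
by rewrite /tF_basis sum_subsets_at0 big_set0 expr0z scf1r replace_set0.
Qed.

Lemma tE_kappa_basis_gt1 l k : (1 < l)%N -> tE q i l (kappa_basis q k) = 0.
Proof.
move=> l_gt1; rewrite [LHS]linext_kappa_basis big1 ?scfr0 // => w _.
by rewrite /tE_basis sum_subsets_at_gt1 ?scfr0 //; apply: place_omit_inj.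
Qed.

Lemma tF_kappa_basis_gt1 l k : (1 < l)%N -> tF q i l (kappa_basis q k) = 0.
Proof.
move=> l_gt1; rewrite [LHS]linext_kappa_basis big1 ?scfr0 // => w _.
by rewrite /tF_basis sum_subsets_at_gt1 ?scfr0 //; apply: place_omit_inj.
Qed.

Lemma dE1 (phi : vec) : dE q i 1 phi = (- (phi i / q)) *:: Defs.vbasis R (up i).
Proof.
apply/ffunP => k; rewrite !ffunE /pairing (bigD1 i) //= big1 ?addr0 => [|k' nk]; last first.
  by rewrite !ffunE val_eqE (negbTE nk) oppr0 mulr0.
rewrite !ffunE eqxx hwtE eqxx (negbTE up_neq) [q ^ _](_ : _ = q^-1) // [k == _]eq_sym.
by rewrite mulrN mulNr mulrA.
Qed.

Lemma dF1 (phi : vec) : dF q i 1 phi = (- (q * phi (up i))) *:: Defs.vbasis R i.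
Proof.
apply/ffunP => k; rewrite !ffunE /pairing (bigD1 (up i)) //= big1 ?addr0 => [|k' nk];
  last first.
  by rewrite !ffunE -val_up val_eqE (negbTE nk) mulr0 oppr0 mulr0.
rewrite !ffunE -val_up !eqxx hwtE eqxx (negbTE up_neq) [q ^ _](_ : _ = q) // [k == _]eq_sym.
by rewrite mulrN mulNr mulrA [phi _ * q]mulrC.
Qed.

Lemma kappa_dE l (phi : vec) : kappa q (dE q i l phi) = tE q i l (kappa q phi).
Proof.
case: l => [|[|l]]; first by rewrite tE0; congr (kappa q _); exact: dualize_id.
  rewrite dE1 kappa_scf_vbasis tE_kappa (bigD1 i) //= tE1_kappa_basis eqxx scfrA.
  rewrite big1 => [|k /negbTE nki]; last by rewrite tE1_kappa_basis nki scfr0.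
  by rewrite addr0 mulrN.
rewrite tE_kappa big1 => [|k _]; last by rewrite tE_kappa_basis_gt1 ?scfr0.
by rewrite -kappa0; congr (kappa q _); exact: dualize0.
Qed.

Lemma kappa_dF l (phi : vec) : kappa q (dF q i l phi) = tF q i l (kappa q phi).
Proof.
case: l => [|[|l]]; first by rewrite tF0; congr (kappa q _); exact: dualize_id.
  rewrite dF1 kappa_scf_vbasis tF_kappa (bigD1 (up i)) //= tF1_kappa_basis eqxx scfrA.
  rewrite big1 => [|k /negbTE nku]; last by rewrite tF1_kappa_basis nku scfr0.
  by rewrite addr0 mulrN mulrC.
rewrite tF_kappa big1 => [|k _]; last by rewrite tF_kappa_basis_gt1 ?scfr0.
by rewrite -kappa0; congr (kappa q _); exact: dualize0.
Qed.

End Generators.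

End Kappa.

Theorem lemma2p2 (R : comUnitRingType) (q : R) (n : nat) :
  q \is a GRing.unit -> (0 < n)%N ->
  [/\ (forall (a : R) (phi psi : vec R n),
         @kappa R q n (a *:: phi + psi) = a *:: @kappa R q n phi + @kappa R q n psi),
      is_Uprime_hom q (@kappa R q n) &
      injective (@kappa R q n)].
Proof.
move=> q_unit _; split; first exact: kappa_linear.
  by move=> i lt_i1n; split; [exact: kappa_dK | exact: kappa_dE | exact: kappa_dF].
exact: kappa_inj.
Qed.
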